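(* Let $S$ be a restriction monoid generated, as an algebra of type $(2,1,1,0)$, by a set $A$; let $T=A^*$, $E=P(S)$, and for $v\in T$ let $\overline{v}$ be the value of $v$ in $S$. For $v\in T$ and $e\in E$ let $v\cdot e$ be defined iff $\overline{v}^*\ge e$, and then $v\cdot e=(\overline{v}e)^+$. Then: (1) $\cdot$ is a partially defined action of $T$ on $E$ (satisfying axioms (A), (B), (C)), and the monoid $M(T,E)$ is ultra $F$-restriction (and ample); (2) the map $M(T,E)\to S$, $(e,v)\mapsto e\overline{v}$, is a surjective projection separating homomorphism of $(2,1,1,0)$-algebras.
   Context: Restriction semigroup: algebra $(S,\cdot,{}^*,{}^+)$ with $(S,\cdot)$ a semigroup satisfying $xx^*=x$, $x^*y^*=y^*x^*$, $(xy^* )^*=x^*y^*$, $x^*y=y(xy)^*$, $x^+x=x$, $x^+y^+=y^+x^+$, $(x^+y)^+=x^+y^+$, $xy^+=(xy)^+x$, $(x^+)^*=x^+$, $(x^* )^+=x^*$; a restriction monoid has an identity $1$ (type $(2,1,1,0)$). $P(S)=\{x^*\}$ is the semilattice of projections; $\sigma$ is the least congruence identifying projections; $S$ is proper if ($a^*=b^*$, $a\sigma b$) or ($a^+=b^+$, $a\sigma b$) imply $a=b$; $F$-restriction if each $\sigma$-class has a maximum in the order $a\le b\iff a=eb$ ($e\in P(S)$); ample if $ac=bc\Rightarrow ac^+=bc^+$ and $ca=cb\Rightarrow c^*a=c^*b$. A homomorphism is projection separating if it is injective on projections. Left partial action of monoid $T$ on semilattice $Y$: $1\cdot y=y$; if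 $t\cdot y$, $s\cdot(t\cdot y)$ defined then $(st)\cdot y$ defined and equal. Axioms with $\varphi_t\colon y\mapsto t\cdot y$: (A) $\mathrm{dom}\varphi_t,\mathrm{ran}\varphi_t$ order ideals; (B) $\varphi_t$ an order-isomorphism between them; (C) $\mathrm{dom}\varphi_t\ne\varnothing$. Partially defined action: $(st)\cdot x$ defined iff $t\cdot x$ and $s\cdot(t\cdot x)$ defined. Reverse: $y\circ t=\varphi_t^{-1}(y)$ for $y\in\mathrm{ran}\varphi_t$. $M(T,Y)=\{(y,t)\colon y\circ t\text{ defined}\}$, $(x,s)(y,t)=(s\cdot((x\circ s)\wedge y),st)$, $(y,t)^*=(y\circ t,1)$, $(y,t)^+=(y,1)$. Underlying left partial action of a proper restriction semigroup $S$: $t\cdot e$ ($t\in S/\sigma$) defined iff some $a\in t$ has $a^*\ge e$, value $(ae)^+$. Ultra $F$-restriction: proper, $F$-restriction, and the underlying left partial action is a partially defined action. *)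

From Stdlib Require Import List ClassicalEpsilon.

Record ralg : Type := RAlg {
  car :> Type;
  rmul : car -> car -> car;
  rstar : car -> car;
  rplus : car -> car;
  rone : car }.

Arguments rmul {_}. Arguments rstar {_}. Arguments rplus {_}. Arguments rone {_}.

Record is_restriction_monoid (S : ralg) : Prop := {
  rm_assoc : forall x y z : S, rmul x (rmul y z) = rmul (rmul x y) z;
  rm_onel : forall x : S, rmul rone x = x;
  rm_oner : forall x : S, rmul x rone = x;
  rm_1 : forall x : S, rmul x (rstar x) = x;
  rm_2 : forall x y : S, rmul (rstar x) (rstar y) = rmul (rstar y) (rstar x);
  rm_3 : forall x y : S, rstar (rmul x (rstar y)) = rmul (rstar x) (rstar y);
  rm_4 : forall x y : S, rmul (rstar x) y = rmul y (rstar (rmul x y));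
  rm_5 : forall x : S, rmul (rplus x) x = x;
  rm_6 : forall x y : S, rmul (rplus x) (rplus y) = rmul (rplus y) (rplus x);
  rm_7 : forall x y : S, rplus (rmul (rplus x) y) = rmul (rplus x) (rplus y);
  rm_8 : forall x y : S, rmul x (rplus y) = rmul (rplus (rmul x y)) x;
  rm_9 : forall x : S, rstar (rplus x) = rplus x;
  rm_10 : forall x : S, rplus (rstar x) = rstar x }.

Inductive generated (S : ralg) {A : Type} (g : A -> S) : S -> Prop :=
  | gen_base : forall a, generated S g (g a)
  | gen_one : generated S g rone
  | gen_mul : forall x y, generated S g x -> generated S g y -> generated S g (rmul x y)
  | gen_star : forall x, generated S g x -> generated S g (rstar x)
  | gen_plus : forall x, generated S g x -> generated S g (rplus x).

Definition isProj (S : ralg) (x : S) : Prop := exists y : S, x = rstar y.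
Definition natle (S : ralg) (a b : S) : Prop := exists e : S, isProj S e /\ a = rmul e b.
Definition Proj (S : ralg) : Type := { e : S | isProj S e }.
Definition leP (S : ralg) (e f : Proj S) : Prop := natle S (proj1_sig e) (proj1_sig f).

Definition is_congruence (S : ralg) (th : S -> S -> Prop) : Prop :=
  (forall a, th a a) /\ (forall a b, th a b -> th b a) /\
  (forall a b c, th a b -> th b c -> th a c) /\
  (forall a b c : S, th a b -> th (rmul c a) (rmul c b) /\ th (rmul a c) (rmul b c)) /\
  (forall a b : S, th a b -> th (rstar a) (rstar b) /\ th (rplus a) (rplus b)).

Definition sigma (S : ralg) (a b : S) : Prop :=
  forall th, is_congruence S th ->
    (forall e f, isProj S e -> isProj S f -> th e f) -> th a b.

Definition proper (S : ralg) : Prop :=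
  forall a b : S, sigma S a b ->
    (rstar a = rstar b -> a = b) /\ (rplus a = rplus b -> a = b).

Definition F_restriction (S : ralg) : Prop :=
  forall a : S, exists m : S, sigma S a m /\ (forall b, sigma S a b -> natle S b m).

Definition ample (S : ralg) : Prop :=
  (forall a b c : S, rmul a c = rmul b c -> rmul a (rplus c) = rmul b (rplus c)) /\
  (forall a b c : S, rmul c a = rmul c b -> rmul (rstar c) a = rmul (rstar c) b).

Definition pdom {T Y : Type} (R : T -> Y -> Y -> Prop) (t : T) (y : Y) : Prop :=
  exists z, R t y z.
Definition pran {T Y : Type} (R : T -> Y -> Y -> Prop) (t : T) (z : Y) : Prop :=
  exists y, R t y z.

(* R t y z  means  "t . y is defined and equals z" *)
Record is_left_partial_action {T Y : Type} (op : T -> T -> T) (u : T)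
    (R : T -> Y -> Y -> Prop) : Prop := {
  lpa_fun : forall t y z1 z2, R t y z1 -> R t y z2 -> z1 = z2;
  lpa_unit : forall y, R u y y;
  lpa_comp : forall s t y z w, R t y z -> R s z w -> R (op s t) y w }.

Definition is_partially_defined_action {T Y : Type} (op : T -> T -> T) (u : T)
    (R : T -> Y -> Y -> Prop) : Prop :=
  is_left_partial_action op u R /\
  (forall s t y, pdom R (op s t) y <-> (exists z, R t y z /\ pdom R s z)).

Definition order_ideal {Y : Type} (le : Y -> Y -> Prop) (D : Y -> Prop) : Prop :=
  forall y z, D y -> le z y -> D z.

Definition axiomA {T Y : Type} (le : Y -> Y -> Prop) (R : T -> Y -> Y -> Prop) : Prop :=
  forall t, order_ideal le (pdom R t) /\ order_ideal le (pran R t).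

(* phi_t is an order isomorphism dom phi_t -> ran phi_t
   (it is onto ran phi_t by definition of ran) *)
Definition axiomB {T Y : Type} (le : Y -> Y -> Prop) (R : T -> Y -> Y -> Prop) : Prop :=
  forall t y1 y2 z1 z2, R t y1 z1 -> R t y2 z2 ->
    (z1 = z2 -> y1 = y2) /\ (le y1 y2 <-> le z1 z2).

Definition axiomC {T Y : Type} (R : T -> Y -> Y -> Prop) : Prop :=
  forall t, exists y, pdom R t y.

Definition SigmaClass (S : ralg) : Type := { C : S -> Prop | exists a, C = sigma S a }.
Definition classOf (S : ralg) (a : S) : SigmaClass S :=
  exist _ (sigma S a) (ex_intro _ a eq_refl).
Definition rep (S : ralg) (C : SigmaClass S) : S :=
  proj1_sig (constructive_indefinite_description _ (proj2_sig C)).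
Definition classMul (S : ralg) (C D : SigmaClass S) : SigmaClass S :=
  classOf S (rmul (rep S C) (rep S D)).
Definition classOne (S : ralg) : SigmaClass S := classOf S rone.

Definition underlying_action (S : ralg) (t : SigmaClass S) (e f : Proj S) : Prop :=
  exists a : S, proj1_sig t a /\ natle S (proj1_sig e) (rstar a) /\
    proj1_sig f = rplus (rmul a (proj1_sig e)).

Definition ultra_F_restriction (S : ralg) : Prop :=
  proper S /\ F_restriction S /\
  is_partially_defined_action (classMul S) (classOne S) (underlying_action S).

Section MTY.
Context {T Y : Type} (op : T -> T -> T) (u : T) (meet : Y -> Y -> Y) (top : Y)
        (R : T -> Y -> Y -> Prop).

(* y o t  (the reverse action), defined for y in ran phi_t *)
Definition Mrev (t : T) (x : Y) : Y := epsilon (inhabits x) (fun y => R t y x).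
(* t . y, defined for y in dom phi_t *)
Definition Mact (t : T) (y : Y) : Y := epsilon (inhabits y) (fun z => R t y z).

Definition inM (p : Y * T) : Prop := pran R (snd p) (fst p).

Definition Mraw_mul (p q : Y * T) : Y * T :=
  (Mact (snd p) (meet (Mrev (snd p) (fst p)) (fst q)), op (snd p) (snd q)).
Definition Mraw_star (p : Y * T) : Y * T := (Mrev (snd p) (fst p), u).
Definition Mraw_plus (p : Y * T) : Y * T := (fst p, u).
Definition Mraw_one : Y * T := (top, u).

Definition M_closed : Prop :=
  inM Mraw_one /\
  (forall p q, inM p -> inM q -> inM (Mraw_mul p q)) /\
  (forall p, inM p -> inM (Mraw_star p) /\ inM (Mraw_plus p)).

Definition Mcar : Type := { p : Y * T | inM p }.

(* the fallbacks below are never used once M_closed holds *)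
Definition Mmul (p q : Mcar) : Mcar :=
  match excluded_middle_informative (inM (Mraw_mul (proj1_sig p) (proj1_sig q))) with
  | left h => exist _ _ h | right _ => p end.
Definition Mstar (p : Mcar) : Mcar :=
  match excluded_middle_informative (inM (Mraw_star (proj1_sig p))) with
  | left h => exist _ _ h | right _ => p end.
Definition Mplus (p : Mcar) : Mcar :=
  match excluded_middle_informative (inM (Mraw_plus (proj1_sig p))) with
  | left h => exist _ _ h | right _ => p end.

Definition Malg (H1 : inM Mraw_one) : ralg :=
  RAlg Mcar Mmul Mstar Mplus (exist _ _ H1).
End MTY.

Definition wval (S : ralg) {A : Type} (g : A -> S) (v : list A) : S :=
  fold_right (fun a acc => rmul (g a) acc) rone v.

(* product of projections (meet in E = P(S)); fallback never used in a restriction monoid *)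
Definition projMul (S : ralg) (e f : Proj S) : Proj S :=
  match excluded_middle_informative (isProj S (rmul (proj1_sig e) (proj1_sig f))) with
  | left h => exist _ _ h | right _ => e end.

(* identity 1 of S as a projection (top of E); fallback never used *)
Definition projOne (S : ralg) : Proj S :=
  match excluded_middle_informative (isProj S rone) with
  | left h => exist _ _ h | right _ => exist _ (rstar rone) (ex_intro _ rone eq_refl) end.

Definition word_action (S : ralg) {A : Type} (g : A -> S) (v : list A) (e f : Proj S) : Prop :=
  natle S (proj1_sig e) (rstar (wval S g v)) /\
  proj1_sig f = rplus (rmul (wval S g v) (proj1_sig e)).

Definition is_hom (S1 S2 : ralg) (h : S1 -> S2) : Prop :=
  (forall x y, h (rmul x y) = rmul (h x) (h y)) /\
  (forall x, h (rstar x) = rstar (h x)) /\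
  (forall x, h (rplus x) = rplus (h x)) /\
  h rone = rone.

Definition projection_separating (S1 S2 : ralg) (h : S1 -> S2) : Prop :=
  forall x y : S1, isProj S1 x -> isProj S1 y -> h x = h y -> x = y.

Definition surjective {X Z : Type} (h : X -> Z) : Prop := forall z, exists x, h x = z.

From Stdlib Require Import List ClassicalEpsilon ProofIrrelevance.

(* A pair [(e, v)] lies in M(T,E) iff [e <= (wval v)^+], and then [e] is recovered
   from [e ⋅ wval v] as its [^+].  Hence [(e, v) |-> (e ⋅ wval v, v)] is an injective
   homomorphism from M(T,E) into S × A^* (the words carrying trivial unary operations):
   M(T,E) is a restriction monoid, and its first component [(e, v) |-> e ⋅ wval v] is a
   homomorphism onto S, because every element generated by A has the form [e ⋅ wval v].
   The projections of M(T,E) are the pairs [(e, nil)], so sigma relates two pairs iff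
   they carry the same word.  This yields properness, the maxima [((wval v)^+, v)] of the
   sigma-classes, and ampleness (words cancel); and it identifies the underlying action
   of M(T,E) with the action of words.  Both that action and the action of T on E are
   the partial action [x · a = (x ⋅ a)^+], [a <= x^*], of S on its projections, pulled
   back along a monoid morphism into S, and the axioms are checked once for it. *)

Lemma sig_inj {X : Type} {P : X -> Prop} (x y : {a : X | P a}) :
  proj1_sig x = proj1_sig y -> x = y.
Proof. destruct x, y; simpl; intros; apply subset_eq_compat; assumption. Qed.

Lemma restriction_monoid_inj (M N : ralg) (h : M -> N) :
  is_restriction_monoid N -> (forall x y, h x = h y -> x = y) -> is_hom M N h ->
  is_restriction_monoid M.
Proof.
  intros [] h_inj (h_mul & h_star & h_plus & h_one).
  constructor; intros; apply h_inj;
    repeat (rewrite h_mul || rewrite h_star || rewrite h_plus || rewrite h_one); auto.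
Qed.

Definition prod_ralg (S1 S2 : ralg) : ralg :=
  RAlg (S1 * S2) (fun x y => (rmul (fst x) (fst y), rmul (snd x) (snd y)))
    (fun x => (rstar (fst x), rstar (snd x))) (fun x => (rplus (fst x), rplus (snd x)))
    (rone, rone).

Lemma prod_restriction_monoid (S1 S2 : ralg) :
  is_restriction_monoid S1 -> is_restriction_monoid S2 ->
  is_restriction_monoid (prod_ralg S1 S2).
Proof.
  intros [] []; constructor; intros;
    repeat match goal with p : car (prod_ralg _ _) |- _ => destruct p end;
    simpl; f_equal; auto.
Qed.

Definition list_ralg (A : Type) : ralg :=
  RAlg (list A) (@app A) (fun _ => nil) (fun _ => nil) nil.

Lemma list_restriction_monoid (A : Type) : is_restriction_monoid (list_ralg A).
Proof. constructor; intros; simpl; rewrite ?app_nil_r, ?app_assoc; reflexivity. Qed.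

Section RestrictionMonoid.
Variable S : ralg.
Hypothesis HS : is_restriction_monoid S.

Local Notation "x ⋅ y" := (@rmul S x y) (at level 40, left associativity).
Local Notation "x ^*" := (@rstar S x) (at level 30, format "x ^*").
Local Notation "x ^+" := (@rplus S x) (at level 30, format "x ^+").
Local Notation one := (@rone S).

Lemma mulA x y z : x ⋅ (y ⋅ z) = x ⋅ y ⋅ z. Proof. exact (rm_assoc _ HS x y z). Qed.
Lemma mul1r x : one ⋅ x = x. Proof. exact (rm_onel _ HS x). Qed.
Lemma mulr1 x : x ⋅ one = x. Proof. exact (rm_oner _ HS x). Qed.

Definition projection (e : S) : Prop := e^* = e.

Lemma star_projection x : projection (x^*).
Proof.
  unfold projection. rewrite <- (rm_10 _ HS x) at 1.
  rewrite (rm_9 _ HS). apply (rm_10 _ HS).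
Qed.

Lemma plus_projection x : projection (x^+). Proof. apply (rm_9 _ HS). Qed.

Lemma projection_plus e : projection e -> e^+ = e.
Proof. unfold projection. intro he. rewrite <- he. apply (rm_10 _ HS). Qed.

Lemma projection_idem e : projection e -> e ⋅ e = e.
Proof. unfold projection. intro he. rewrite <- he at 2. apply (rm_1 _ HS). Qed.

Lemma projection_comm e f : projection e -> projection f -> e ⋅ f = f ⋅ e.
Proof. unfold projection. intros he hf. rewrite <- he, <- hf. apply (rm_2 _ HS). Qed.

Lemma projection_mul e f : projection e -> projection f -> projection (e ⋅ f).
Proof.
  unfold projection. intros he hf. rewrite <- hf at 1.
  rewrite (rm_3 _ HS), he, hf. reflexivity.
Qed.

Lemma projection_one : projection one.
Proof. unfold projection. rewrite <- (mul1r (one^*)). apply (rm_1 _ HS). Qed.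

Lemma plus_one : one^+ = one. Proof. apply projection_plus, projection_one. Qed.

Lemma isProjP e : isProj S e <-> projection e.
Proof.
  split.
  - intros [y ->]. apply star_projection.
  - intro he. exists e. symmetry. exact he.
Qed.

Lemma star_mul_star x y : (x ⋅ y)^* = (x^* ⋅ y)^*.
Proof.
  rewrite (rm_4 _ HS), (rm_3 _ HS), (rm_2 _ HS), <- (rm_3 _ HS), <- mulA, (rm_1 _ HS).
  reflexivity.
Qed.

Lemma plus_mul_plus x y : (x ⋅ y)^+ = (x ⋅ y^+)^+.
Proof.
  rewrite (rm_8 _ HS), (rm_7 _ HS), (rm_6 _ HS), <- (rm_7 _ HS), mulA, (rm_5 _ HS).
  reflexivity.
Qed.

Lemma projection_mull e x : projection e -> e ⋅ x = x ⋅ (e ⋅ x)^*.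
Proof. unfold projection. intro he. rewrite <- he at 1. apply (rm_4 _ HS). Qed.

Lemma projection_mulr e x : projection e -> x ⋅ e = (x ⋅ e)^+ ⋅ x.
Proof. intro he. rewrite <- (projection_plus e he) at 1. apply (rm_8 _ HS). Qed.

Lemma star_mul_projection e x : projection e -> (x ⋅ e)^* = x^* ⋅ e.
Proof. unfold projection. intro he. rewrite <- he at 1. rewrite (rm_3 _ HS), he. reflexivity. Qed.

Lemma plus_projection_mul e x : projection e -> (e ⋅ x)^+ = e ⋅ x^+.
Proof.
  intro he. rewrite <- (projection_plus e he) at 1.
  rewrite (rm_7 _ HS), projection_plus; auto.
Qed.

Definition ple (e f : S) : Prop := e ⋅ f = e.

Lemma ple_refl e : projection e -> ple e e. Proof. apply projection_idem. Qed.

Lemma ple_trans e f h : ple e f -> ple f h -> ple e h.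
Proof. unfold ple. intros ef fh. rewrite <- ef, <- mulA, fh. reflexivity. Qed.

Lemma ple_mull e f : projection e -> projection f -> ple (e ⋅ f) e.
Proof.
  intros he hf. unfold ple.
  rewrite <- mulA, (projection_comm f e), mulA, projection_idem; auto.
Qed.

Lemma ple_mulr e f : projection f -> ple (e ⋅ f) f.
Proof. intro hf. unfold ple. rewrite <- mulA, projection_idem; auto. Qed.

Lemma ple_star_mul x y : ple ((x ⋅ y)^*) (y^*).
Proof. unfold ple. rewrite <- (rm_3 _ HS), <- mulA, (rm_1 _ HS). reflexivity. Qed.

Lemma ple_plus_mul x y : ple ((x ⋅ y)^+) (x^+).
Proof.
  unfold ple. rewrite (projection_comm _ _ (plus_projection _) (plus_projection _)).
  rewrite <- (rm_7 _ HS), mulA, (rm_5 _ HS). reflexivity.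
Qed.

Lemma ple_comm e f : projection e -> projection f -> ple e f -> f ⋅ e = e.
Proof. intros he hf ef. rewrite projection_comm; auto. Qed.

Lemma natle_ple a b : projection a -> projection b -> natle S a b <-> ple a b.
Proof.
  intros ha hb. split.
  - intros [e [_ ->]]. unfold ple. rewrite <- mulA, projection_idem; auto.
  - intro ab. exists a. split; [apply isProjP; exact ha | symmetry; exact ab].
Qed.

Lemma star_swap e x : projection e -> x^* ⋅ e = ((x ⋅ e)^+ ⋅ x)^*.
Proof. intro he. rewrite <- projection_mulr, star_mul_projection; auto. Qed.

Lemma plus_mul_star f x : projection f -> ple f (x^+) -> (x ⋅ (f ⋅ x)^*)^+ = f.
Proof. intros hf fx. rewrite <- projection_mull, plus_projection_mul; auto. Qed.

Lemma plus_projection_mul_projection e x f : projection e -> projection f ->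
  (e ⋅ x ⋅ f)^+ = e ⋅ (x ⋅ f)^+.
Proof.
  intros he hf. rewrite <- mulA, (projection_mulr f x hf) at 1. rewrite mulA.
  rewrite plus_projection_mul by (apply projection_mul; auto using plus_projection).
  rewrite <- mulA, ple_plus_mul. reflexivity.
Qed.

Lemma ple_plus_mul_projection x y e : projection e -> ple e (y^+) ->
  ple ((x ⋅ e)^+) ((x ⋅ y)^+).
Proof.
  intros he ey. unfold ple in ey.
  rewrite <- ey, mulA, <- plus_mul_plus, <- mulA, (projection_mull e y he), mulA.
  apply ple_plus_mul.
Qed.

Definition acts (x a b : S) : Prop := ple a (x^*) /\ b = (x ⋅ a)^+.

Lemma acts_one a : projection a -> acts one a a.
Proof.
  intro ha. split.
  - unfold ple. rewrite projection_one, mulr1. reflexivity.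
  - rewrite mul1r, projection_plus; auto.
Qed.

Lemma acts_inv x a b : projection a -> acts x a b -> a = (b ⋅ x)^*.
Proof.
  intros ha [ax ->]. rewrite <- star_swap by auto.
  symmetry. apply ple_comm; auto using star_projection.
Qed.

Lemma acts_mul x y a b c : projection a -> acts y a b -> acts x b c -> acts (x ⋅ y) a c.
Proof.
  intros ha [ay hb] [bx ->].
  assert (hbp : projection b) by (rewrite hb; apply plus_projection).
  split.
  - assert (yax : x^* ⋅ (y ⋅ a) = y ⋅ a).
    { rewrite (projection_mulr a y ha), <- hb, mulA, (ple_comm b (x^*));
        auto using star_projection. }
    assert (xya : (x ⋅ y ⋅ a)^* = a).
    { rewrite <- mulA, star_mul_star, yax, star_mul_projection by auto.
      apply ple_comm; auto using star_projection. }
    unfold ple. rewrite star_mul_projection in xya by auto.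
    rewrite projection_comm; auto using star_projection.
  - rewrite hb, <- plus_mul_plus, mulA. reflexivity.
Qed.

Lemma acts_mul_dom x y a : projection a -> ple a ((x ⋅ y)^*) ->
  acts y a ((y ⋅ a)^+) /\ ple ((y ⋅ a)^+) (x^*).
Proof.
  intros ha axy. split.
  - split; [eapply ple_trans; [exact axy | apply ple_star_mul] | reflexivity].
  - assert (ya : y ⋅ a = x^* ⋅ (y ⋅ a)).
    { unfold ple in axy. rewrite <- axy at 1.
      rewrite (projection_comm a), mulA, <- (rm_4 _ HS), mulA by auto using star_projection.
      reflexivity. }
    unfold ple. rewrite projection_comm by auto using star_projection, plus_projection.
    rewrite <- plus_projection_mul, <- ya by apply star_projection. reflexivity.
Qed.

Lemma acts_ple x a a' b b' : projection a -> projection a' ->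
  acts x a b -> acts x a' b' -> ple a a' <-> ple b b'.
Proof.
  intros ha ha' hb hb'. split.
  - intro aa'. destruct hb as [_ ->], hb' as [_ ->].
    rewrite <- (ple_comm a a' ha ha' aa'), mulA. apply ple_plus_mul.
  - intro bb'. rewrite (acts_inv x a b ha hb), (acts_inv x a' b' ha' hb').
    unfold ple in bb'. rewrite <- bb', <- mulA. apply ple_star_mul.
Qed.

Lemma acts_projection_mull e x a b : projection e -> projection a ->
  acts (e ⋅ x) a b -> acts x a b.
Proof.
  intros he ha [aex ->]. split.
  - eapply ple_trans; [exact aex | apply ple_star_mul].
  - rewrite (projection_mull e x he), <- mulA, (ple_comm a); auto using star_projection.
Qed.

Section TransportedAction.
Context {T Y : Type} {op : T -> T -> T} {u : T} {R : T -> Y -> Y -> Prop}.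
Context {le : Y -> Y -> Prop} {val : T -> S} {p : Y -> S}.
Hypothesis val_op : forall s t, val (op s t) = val s ⋅ val t.
Hypothesis val_u : val u = one.
Hypothesis p_projection : forall y, projection (p y).
Hypothesis p_inj : forall y z, p y = p z -> y = z.
Hypothesis p_onto : forall e, projection e -> exists y, p y = e.
Hypothesis R_acts : forall t y z, R t y z <-> acts (val t) (p y) (p z).
Hypothesis le_ple : forall y z, le y z <-> ple (p y) (p z).

Lemma pdom_acts t y : pdom R t y <-> ple (p y) ((val t)^*).
Proof.
  split.
  - intros [z hz]. apply R_acts in hz. apply hz.
  - intro h. destruct (p_onto _ (plus_projection (val t ⋅ p y))) as [z hz].
    exists z. apply R_acts. rewrite hz. split; [exact h | reflexivity].
Qed.

Lemma pran_acts t z : pran R t z <-> ple (p z) ((val t)^+).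
Proof.
  split.
  - intros [y hy]. apply R_acts in hy. destruct hy as [_ ->]. apply ple_plus_mul.
  - intro h. destruct (p_onto _ (star_projection (p z ⋅ val t))) as [y hy].
    exists y. apply R_acts. rewrite hy. split.
    + apply ple_star_mul.
    + symmetry. apply plus_mul_star; auto.
Qed.

Lemma R_mul s t y z x : R t y z -> R s z x -> R (op s t) y x.
Proof.
  intros h1 h2. apply R_acts in h1, h2. apply R_acts. rewrite val_op.
  eapply acts_mul; eauto.
Qed.

Lemma partially_defined_action_of_acts : is_partially_defined_action op u R.
Proof.
  split; [split|].
  - intros t y z1 z2 h1 h2. apply R_acts in h1, h2. apply p_inj.
    destruct h1 as [_ ->], h2 as [_ ->]. reflexivity.
  - intro y. apply R_acts. rewrite val_u. apply acts_one, p_projection.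
  - exact R_mul.
  - intros s t y. split.
    + intro h. apply pdom_acts in h. rewrite val_op in h.
      destruct (acts_mul_dom _ _ _ (p_projection y) h) as [h1 h2].
      destruct (p_onto _ (plus_projection (val t ⋅ p y))) as [z hz].
      exists z. split.
      * apply R_acts. rewrite hz. exact h1.
      * apply pdom_acts. rewrite hz. exact h2.
    + intros [z [h1 [x h2]]]. exists x. eapply R_mul; eauto.
Qed.

Lemma axiomA_of_acts : axiomA le R.
Proof.
  intro t. split; intros y z hy zy; apply le_ple in zy.
  - apply pdom_acts in hy. apply pdom_acts. eapply ple_trans; eauto.
  - apply pran_acts in hy. apply pran_acts. eapply ple_trans; eauto.
Qed.

Lemma axiomB_of_acts : axiomB le R.
Proof.
  intros t y1 y2 z1 z2 h1 h2. apply R_acts in h1, h2. split.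
  - intros <-. apply p_inj.
    rewrite (acts_inv _ _ _ (p_projection y1) h1), (acts_inv _ _ _ (p_projection y2) h2).
    reflexivity.
  - rewrite !le_ple. apply (acts_ple (val t)); auto.
Qed.

Lemma axiomC_of_acts : axiomC R.
Proof.
  intro t. destruct (p_onto _ (star_projection (val t))) as [y hy].
  exists y. apply pdom_acts. rewrite hy. apply ple_refl, star_projection.
Qed.
End TransportedAction.

Lemma Proj_projection (e : Proj S) : projection (proj1_sig e).
Proof. apply isProjP, proj2_sig. Qed.

Definition Proj_of (x : S) (hx : projection x) : Proj S :=
  exist _ x (proj2 (isProjP x) hx).

Lemma Proj_onto e : projection e -> exists y : Proj S, proj1_sig y = e.
Proof. intro he. exists (Proj_of e he). reflexivity. Qed.

Lemma leP_ple (e f : Proj S) : leP S e f <-> ple (proj1_sig e) (proj1_sig f).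
Proof. apply natle_ple; apply Proj_projection. Qed.

Section Words.
Variables (A : Type) (g : A -> S).
Local Notation w := (wval S g).
Local Notation R := (word_action S g).

Lemma wval_app s t : w (s ++ t) = w s ⋅ w t.
Proof.
  induction s as [|a s IH]; simpl.
  - symmetry. apply mul1r.
  - rewrite IH, mulA. reflexivity.
Qed.

Lemma word_action_acts v e f : R v e f <-> acts (w v) (proj1_sig e) (proj1_sig f).
Proof.
  unfold word_action, acts.
  rewrite natle_ple by auto using Proj_projection, star_projection. reflexivity.
Qed.

Ltac word_action_valuation :=
  auto using wval_app, sig_inj, Proj_projection, Proj_onto, word_action_acts, leP_ple.

Lemma word_action_properties :
  is_partially_defined_action (@app A) (@nil A) R /\
  axiomA (leP S) R /\ axiomB (leP S) R /\ axiomC R.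
Proof.
  split; [|split; [|split]];
    [ apply (partially_defined_action_of_acts (val := w) (p := @proj1_sig _ _))
    | apply (axiomA_of_acts (val := w) (p := @proj1_sig _ _))
    | apply (axiomB_of_acts (val := w) (p := @proj1_sig _ _))
    | apply (axiomC_of_acts (val := w) (p := @proj1_sig _ _)) ];
    word_action_valuation.
Qed.

Lemma word_pdom t y : pdom R t y <-> ple (proj1_sig y) ((w t)^*).
Proof. apply (pdom_acts (val := w) (p := @proj1_sig _ _)); word_action_valuation. Qed.

Lemma word_pran t z : pran R t z <-> ple (proj1_sig z) ((w t)^+).
Proof. apply (pran_acts (val := w) (p := @proj1_sig _ _)); word_action_valuation. Qed.

Lemma generated_normal_form z : generated S g z -> exists e s, projection e /\ z = e ⋅ w s.
Proof.
  induction 1 as [a | | x y _ [e [s [he ->]]] _ [f [t [hf ->]]]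
                 | x _ [e [s [he ->]]] | x _ [e [s [he ->]]]].
  - exists one, (a :: nil). split; [apply projection_one |]. simpl.
    rewrite mul1r, mulr1. reflexivity.
  - exists one, nil. split; [apply projection_one |]. symmetry. apply mul1r.
  - exists (e ⋅ (w s ⋅ f)^+), (s ++ t).
    split; [apply projection_mul; auto using plus_projection |].
    rewrite wval_app, !mulA, <- (mulA e (w s) f), (projection_mulr f (w s) hf) at 1.
    rewrite !mulA. reflexivity.
  - exists ((e ⋅ w s)^*), nil. split; [apply star_projection |]. symmetry. apply mulr1.
  - exists ((e ⋅ w s)^+), nil. split; [apply plus_projection |]. symmetry. apply mulr1.
Qed.

Lemma projMul_val e f : proj1_sig (projMul S e f) = proj1_sig e ⋅ proj1_sig f.
Proof.
  unfold projMul. destruct excluded_middle_informative as [? | nproj]; [reflexivity |].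
  exfalso. apply nproj, isProjP, projection_mul; apply Proj_projection.
Qed.

Lemma projOne_val : proj1_sig (projOne S) = one.
Proof.
  unfold projOne. destruct excluded_middle_informative as [? | nproj]; [reflexivity |].
  exfalso. apply nproj, isProjP, projection_one.
Qed.

Lemma Mrev_val t x : pran R t x -> proj1_sig (Mrev R t x) = (proj1_sig x ⋅ w t)^*.
Proof.
  intro hx. pose proof (epsilon_spec (inhabits x) (fun y => R t y x) hx) as hrev.
  apply word_action_acts, acts_inv in hrev; [exact hrev | apply Proj_projection].
Qed.

Lemma Mact_val t y : pdom R t y -> proj1_sig (Mact R t y) = (w t ⋅ proj1_sig y)^+.
Proof.
  intro hy. pose proof (epsilon_spec (inhabits y) (fun z => R t y z) hy) as hact.
  apply word_action_acts in hact. apply hact.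
Qed.

Lemma inM_ple (q : Proj S * list A) : inM R q <-> ple (proj1_sig (fst q)) ((w (snd q))^+).
Proof. apply word_pran. Qed.

Lemma inM_nil e : inM R (e, nil).
Proof.
  apply inM_ple. simpl. rewrite plus_one. unfold ple. apply mulr1.
Qed.

Lemma Mraw_mul_val q r : inM R q -> inM R r ->
  proj1_sig (fst (Mraw_mul (@app A) (projMul S) R q r)) =
  (proj1_sig (fst q) ⋅ w (snd q) ⋅ proj1_sig (fst r))^+.
Proof.
  destruct q as [x s], r as [y t]. unfold inM; simpl. intros hq hr.
  unfold Mraw_mul; simpl. rewrite Mact_val.
  - rewrite projMul_val, Mrev_val, mulA, <- projection_mull by auto using Proj_projection.
    reflexivity.
  - apply word_pdom. rewrite projMul_val, Mrev_val by auto.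
    eapply ple_trans; [apply ple_mull | apply ple_star_mul];
      auto using star_projection, Proj_projection.
Qed.

Lemma inM_Mraw_mul q r : inM R q -> inM R r -> inM R (Mraw_mul (@app A) (projMul S) R q r).
Proof.
  intros hq hr. apply inM_ple. rewrite Mraw_mul_val by auto.
  apply inM_ple in hr. destruct q as [x s], r as [y t]. simpl in *.
  rewrite wval_app, plus_projection_mul_projection by apply Proj_projection.
  eapply ple_trans; [apply ple_mulr, plus_projection |].
  apply ple_plus_mul_projection; auto using Proj_projection.
Qed.

Lemma M_closed_word_action : M_closed (@app A) (@nil A) (projMul S) (projOne S) R.
Proof.
  split; [apply inM_nil | split; [exact inM_Mraw_mul | split; apply inM_nil]].
Qed.

Local Notation Mc := (Mcar R).
Local Notation MM := (Mmul (@app A) (projMul S) R).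
Local Notation MS := (Mstar (@nil A) R).
Local Notation MP := (Mplus (@nil A) R).

Definition px (q : Mc) : S := proj1_sig (fst (proj1_sig q)).
Definition ps (q : Mc) : list A := snd (proj1_sig q).
Definition phi (q : Mc) : S := px q ⋅ w (ps q).

Lemma px_projection q : projection (px q). Proof. apply Proj_projection. Qed.

Lemma px_ple q : ple (px q) ((w (ps q))^+). Proof. apply inM_ple, proj2_sig. Qed.

Lemma px_phi q : px q = (phi q)^+.
Proof. unfold phi. rewrite plus_projection_mul by apply px_projection. symmetry. apply px_ple. Qed.

Lemma px_of_star q : px q = (w (ps q) ⋅ (phi q)^*)^+.
Proof. symmetry. apply plus_mul_star; [apply px_projection | apply px_ple]. Qed.

Lemma Mc_eq_px q r : px q = px r -> ps q = ps r -> q = r.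
Proof.
  destruct q as [[e s] hq], r as [[f t] hr]. unfold px, ps. simpl. intros hpx hps.
  apply sig_inj. simpl. f_equal; [apply sig_inj |]; assumption.
Qed.

Lemma Mc_eq q r : phi q = phi r -> ps q = ps r -> q = r.
Proof. intros hphi hps. apply Mc_eq_px; [rewrite !px_phi, hphi |]; auto. Qed.

Lemma Mc_projection_eq q r : ps q = nil -> ps r = nil -> phi q = phi r -> q = r.
Proof. intros hq hr hphi. apply Mc_eq; [exact hphi | rewrite hq, hr; reflexivity]. Qed.

Lemma MM_val q r : proj1_sig (MM q r) = Mraw_mul (@app A) (projMul S) R (proj1_sig q) (proj1_sig r).
Proof.
  unfold Mmul. destruct excluded_middle_informative as [? | nin]; [reflexivity |].
  exfalso. apply nin, inM_Mraw_mul; apply proj2_sig.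
Qed.

Lemma MS_val q : proj1_sig (MS q) = Mraw_star (@nil A) R (proj1_sig q).
Proof.
  unfold Mstar. destruct excluded_middle_informative as [? | nin]; [reflexivity |].
  exfalso. apply nin, inM_nil.
Qed.

Lemma MP_val q : proj1_sig (MP q) = Mraw_plus (@nil A) (proj1_sig q).
Proof.
  unfold Mplus. destruct excluded_middle_informative as [? | nin]; [reflexivity |].
  exfalso. apply nin, inM_nil.
Qed.

Lemma px_mul q r : px (MM q r) = (phi q ⋅ px r)^+.
Proof. unfold px. rewrite MM_val, Mraw_mul_val by apply proj2_sig. reflexivity. Qed.

Lemma ps_mul q r : ps (MM q r) = ps q ++ ps r.
Proof. unfold ps. rewrite MM_val. reflexivity. Qed.

Lemma px_star q : px (MS q) = (phi q)^*.
Proof. unfold px. rewrite MS_val. apply Mrev_val, proj2_sig. Qed.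

Lemma ps_star q : ps (MS q) = nil.
Proof. unfold ps. rewrite MS_val. reflexivity. Qed.

Lemma px_plus q : px (MP q) = px q.
Proof. unfold px. rewrite MP_val. reflexivity. Qed.

Lemma ps_plus q : ps (MP q) = nil.
Proof. unfold ps. rewrite MP_val. reflexivity. Qed.

Lemma phi_nil q : ps q = nil -> phi q = px q.
Proof. intro hq. unfold phi. rewrite hq. apply mulr1. Qed.

Lemma phi_mul q r : phi (MM q r) = phi q ⋅ phi r.
Proof.
  unfold phi at 1. rewrite px_mul, ps_mul, wval_app. unfold phi.
  rewrite mulA, plus_projection_mul_projection by apply px_projection.
  rewrite <- (mulA (px q)), <- (mulA (px q)), <- projection_mulr by apply px_projection.
  rewrite !mulA. reflexivity.
Qed.

Lemma phi_star q : phi (MS q) = (phi q)^*.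
Proof. rewrite phi_nil by apply ps_star. apply px_star. Qed.

Lemma phi_plus q : phi (MP q) = (phi q)^+.
Proof. rewrite phi_nil, px_plus by apply ps_plus. apply px_phi. Qed.

Lemma phi_surjective : (forall x, generated S g x) -> forall z, exists q : Mc, phi q = z.
Proof.
  intros hg z. destruct (generated_normal_form z (hg z)) as [e [s [he ->]]].
  assert (he' : projection (e ⋅ (w s)^+)) by (apply projection_mul; auto using plus_projection).
  assert (hin : inM R (Proj_of _ he', s)) by (apply inM_ple, ple_mulr, plus_projection).
  exists (exist _ _ hin). unfold phi, px, ps. simpl. rewrite <- mulA, (rm_5 _ HS). reflexivity.
Qed.

Definition Mmax (s : list A) : Mc :=
  let q := (Proj_of _ (plus_projection (w s)), s) in
  exist _ q (proj2 (inM_ple q) (ple_refl _ (plus_projection (w s)))).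

Lemma phi_Mmax s : phi (Mmax s) = w s. Proof. apply (rm_5 _ HS). Qed.

Lemma Mc_decomp q : q = MM (MP q) (Mmax (ps q)).
Proof.
  apply Mc_eq.
  - rewrite phi_mul, phi_plus, phi_Mmax, <- px_phi. reflexivity.
  - rewrite ps_mul, ps_plus. reflexivity.
Qed.

Section Monoid.
Variable H1 : inM R (Mraw_one (@nil A) (projOne S)).
Local Notation M := (Malg (@app A) (@nil A) (projMul S) (projOne S) R H1).

Lemma phi_one : phi (@rone M) = one.
Proof. unfold phi, px, ps. simpl. rewrite projOne_val. apply mulr1. Qed.

Lemma phi_hom : is_hom M S phi.
Proof.
  split; [exact phi_mul | split; [exact phi_star | split; [exact phi_plus | exact phi_one]]].
Qed.

Lemma M_restriction_monoid : is_restriction_monoid M.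
Proof.
  apply (restriction_monoid_inj M (prod_ralg S (list_ralg A)) (fun q => (phi q, ps q))).
  - apply prod_restriction_monoid; [exact HS | apply list_restriction_monoid].
  - intros q r hqr. injection hqr as hphi hps. apply Mc_eq; assumption.
  - split; [|split; [|split]]; intros; simpl; f_equal;
      first [ apply phi_mul | apply ps_mul | apply phi_star | apply ps_star
            | apply phi_plus | apply ps_plus | apply phi_one | reflexivity ].
Qed.

Lemma isProj_M (e : M) : isProj M e <-> ps e = nil.
Proof.
  split.
  - intros [q ->]. apply ps_star.
  - intro he. exists e. apply Mc_projection_eq; [exact he | apply ps_star |].
    change (phi e = phi (MS e)). rewrite phi_star, phi_nil by exact he.
    symmetry. apply px_projection.
Qed.

Lemma isProj_Mplus (q : M) : isProj M (MP q).
Proof. apply isProj_M, ps_plus. Qed.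

Lemma sigma_M (a b : M) : sigma M a b <-> ps a = ps b.
Proof.
  split.
  - intro hab. apply (hab (fun a b => ps a = ps b)).
    + split; [|split; [|split; [|split]]]; simpl; intros.
      * reflexivity.
      * symmetry; assumption.
      * etransitivity; eassumption.
      * rewrite !ps_mul. split; f_equal; assumption.
      * rewrite !ps_star, !ps_plus. split; reflexivity.
    + intros e f he hf. apply isProj_M in he, hf. rewrite he, hf. reflexivity.
  - intros hab th [_ [_ [_ [th_mul _]]]] th_proj.
    rewrite (Mc_decomp a), (Mc_decomp b), <- hab.
    apply (th_mul _ _ (Mmax (ps a))), th_proj; apply isProj_Mplus.
Qed.

Lemma M_proper : proper M.
Proof.
  intros a b hab. apply (proj1 (sigma_M a b)) in hab. split; intro h.
  - change (MS a = MS b) in h. apply (f_equal phi) in h. rewrite !phi_star in h.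
    assert (hpx : px a = px b) by (rewrite (px_of_star a), (px_of_star b), h, hab; reflexivity).
    apply Mc_eq_px; assumption.
  - change (MP a = MP b) in h. apply (f_equal px) in h. rewrite !px_plus in h.
    apply Mc_eq_px; assumption.
Qed.

Lemma M_F_restriction : F_restriction M.
Proof.
  intro a. exists (Mmax (ps a)). split; [apply sigma_M; reflexivity |].
  intros b hb. apply (proj1 (sigma_M a b)) in hb. exists (MP b). split; [apply isProj_Mplus |].
  rewrite hb. apply Mc_decomp.
Qed.

Definition class_word (C : SigmaClass M) : list A := ps (rep M C).

Lemma rep_spec (C : SigmaClass M) : proj1_sig C = sigma M (rep M C).
Proof. unfold rep. destruct constructive_indefinite_description as [r hr]. exact hr. Qed.

Lemma in_class C (a : M) : proj1_sig C a <-> ps a = class_word C.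
Proof.
  rewrite rep_spec, sigma_M. unfold class_word.
  split; intro; symmetry; assumption.
Qed.

Lemma class_word_classOf (a : M) : class_word (classOf M a) = ps a.
Proof. symmetry. apply in_class. simpl. apply sigma_M. reflexivity. Qed.

Lemma Proj_M_projection (e : Proj M) : projection (px (proj1_sig e)).
Proof. apply px_projection. Qed.

Lemma Proj_M_word (e : Proj M) : ps (proj1_sig e) = nil.
Proof. apply isProj_M, proj2_sig. Qed.

Lemma Proj_M_onto x : projection x -> exists e : Proj M, px (proj1_sig e) = x.
Proof.
  intro hx. pose (q := exist _ (Proj_of x hx, nil) (inM_nil _) : M).
  exists (exist _ q (proj2 (isProj_M q) eq_refl)). reflexivity.
Qed.

Lemma natle_M_star (e : Proj M) (a : M) :
  natle M (proj1_sig e) (MS a) -> ple (px (proj1_sig e)) ((phi a)^*).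
Proof.
  intros [k [_ he]]. rewrite <- phi_nil by apply Proj_M_word.
  change (proj1_sig e = MM k (MS a)) in he.
  rewrite he, phi_mul, phi_star. apply ple_mulr, star_projection.
Qed.

Lemma underlying_action_acts C (e f : Proj M) :
  underlying_action M C e f <-> acts (w (class_word C)) (px (proj1_sig e)) (px (proj1_sig f)).
Proof.
  split.
  - intros [a [ha [he hf]]]. apply in_class in ha. rewrite <- ha.
    change (proj1_sig f = MP (MM a (proj1_sig e))) in hf.
    apply (acts_projection_mull (px a)); auto using px_projection, Proj_M_projection.
    split; [apply natle_M_star; exact he |].
    rewrite hf, px_plus, px_mul. reflexivity.
  - intros [hdom hval]. exists (Mmax (class_word C)).
    split; [apply in_class; reflexivity |]. split.
    + exists (proj1_sig e). split; [apply proj2_sig |].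
      change (proj1_sig e = MM (proj1_sig e) (MS (Mmax (class_word C)))).
      apply Mc_projection_eq;
        [apply Proj_M_word | rewrite ps_mul, ps_star, Proj_M_word; reflexivity |].
      rewrite phi_mul, phi_star, phi_Mmax, phi_nil by apply Proj_M_word.
      symmetry. exact hdom.
    + change (proj1_sig f = MP (MM (Mmax (class_word C)) (proj1_sig e))).
      apply Mc_projection_eq; [apply Proj_M_word | apply ps_plus |].
      rewrite phi_plus, phi_mul, phi_Mmax, !phi_nil by apply Proj_M_word.
      exact hval.
Qed.

Lemma M_ultra_F_restriction : ultra_F_restriction M.
Proof.
  split; [exact M_proper | split; [exact M_F_restriction |]].
  apply (partially_defined_action_of_acts (val := fun C => w (class_word C))
                                          (p := fun e => px (proj1_sig e))).
  - intros C D. unfold classMul. rewrite class_word_classOf.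
    change (w (ps (MM (rep M C) (rep M D))) = w (class_word C) ⋅ w (class_word D)).
    rewrite ps_mul, wval_app. reflexivity.
  - unfold classOne. rewrite class_word_classOf. reflexivity.
  - exact Proj_M_projection.
  - intros e f hef. apply sig_inj, Mc_projection_eq; try apply Proj_M_word.
    rewrite !phi_nil by apply Proj_M_word. exact hef.
  - exact Proj_M_onto.
  - exact underlying_action_acts.
Qed.

Lemma M_ample : ample M.
Proof.
  split; intros a b c habc; cbn [rmul rstar rplus Malg] in *;
    pose proof (f_equal px habc) as hpx; pose proof (f_equal ps habc) as hps;
    rewrite !px_mul in hpx; rewrite !ps_mul in hps; apply Mc_eq_px; rewrite ?px_mul, ?ps_mul.
  - rewrite !px_plus. exact hpx.
  - apply app_inv_tail in hps. rewrite hps. reflexivity.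
  - rewrite phi_star, (star_swap (px a)), (star_swap (px b)), hpx by apply px_projection.
    reflexivity.
  - apply app_inv_head in hps. rewrite hps. reflexivity.
Qed.

Lemma phi_projection_separating : projection_separating M S phi.
Proof.
  intros e f he hf hef. apply isProj_M in he, hf. apply Mc_projection_eq; assumption.
Qed.

End Monoid.
End Words.
End RestrictionMonoid.

Theorem lemma3p10 (S : ralg) (A : Type) (g : A -> S) :
  is_restriction_monoid S ->
  (forall x : S, generated S g x) ->
  (is_partially_defined_action (@app A) (@nil A) (word_action S g) /\
   axiomA (leP S) (word_action S g) /\
   axiomB (leP S) (word_action S g) /\
   axiomC (word_action S g)) /\
  M_closed (@app A) (@nil A) (projMul S) (projOne S) (word_action S g) /\
  exists H1 : inM (word_action S g) (projOne S, @nil A),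
    let M := Malg (@app A) (@nil A) (projMul S) (projOne S) (word_action S g) H1 in
    is_restriction_monoid M /\ ultra_F_restriction M /\ ample M /\
    let phi := fun p : M => rmul (proj1_sig (fst (proj1_sig p))) (wval S g (snd (proj1_sig p))) in
    surjective phi /\ projection_separating M S phi /\ is_hom M S phi.
Proof.
  intros HS hg.
  split; [exact (word_action_properties S HS A g) |].
  split; [exact (M_closed_word_action S HS A g) |].
  exists (inM_nil S HS A g (projOne S)). intro M.
  split; [exact (M_restriction_monoid S HS A g _) |].
  split; [exact (M_ultra_F_restriction S HS A g _) |].
  split; [exact (M_ample S HS A g _) |].
  intro phi. split; [| split].
  - exact (phi_surjective S HS A g hg).
  - exact (phi_projection_separating S HS A g _).
  - exact (phi_hom S HS A g _).
Qed.
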